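(* Let $A\in\mathbb{R}^{m\times n}$ have no zero row, with rows $a_1^T,\dots,a_m^T$, and let ${\bf u}=(\mu_1,\dots,\mu_m)\in\mathbb{R}^m$. Let $P_k(\mu_k)=I-\mu_k a_ka_k^T/\|a_k\|_2^2$, $Q_j({\bf u}_j)=P_m(\mu_m)\cdots P_{j+1}(\mu_{j+1})$ for $1\le j\le m-1$, $Q_m({\bf u}_m)=I$, and $$A_{\mathcal S}({\bf u})=\big(Q_1({\bf u}_1)a_1,\dots,Q_m({\bf u}_m)a_m\big)^T\in\mathbb{R}^{m\times n}.$$ Then there exists a unit upper triangular matrix $C({\bf u})\in\mathbb{R}^{m\times m}$ such that $A_{\mathcal S}({\bf u})=C({\bf u})A$.
   Context: ${\bf u}_j=(\mu_{j+1},\dots,\mu_m)$. A unit upper triangular matrix is an upper triangular matrix with all diagonal entries equal to $1$. *)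

From mathcomp Require Import all_boot all_order all_algebra.
Set Implicit Arguments. Unset Strict Implicit. Unset Printing Implicit Defensive.
Import Order.TTheory GRing.Theory Num.Theory.
Local Open Scope ring_scope.

Section Defs.
Variables (R : realFieldType) (m n : nat) (A : 'M[R]_(m, n)).

Definition acol (k : 'I_m) : 'cV[R]_n := (row k A)^T.

Definition nrm2 (k : 'I_m) : R := \sum_(j < n) A k j ^+ 2.

Definition Pk (k : 'I_m) (mu : R) : 'M[R]_n :=
  1%:M - (mu / nrm2 k) *: (acol k *m (acol k)^T).

(* Q_j(u_j) = P_m(mu_m) ... P_{j+1}(mu_{j+1})  (0-based indices here);
   the empty product (j = last index) is the identity. *)
Definition Qj (u : 'I_m -> R) (j : 'I_m) : 'M[R]_n :=
  foldr (fun k M => M *m Pk k (u k)) 1%:M [seq k <- enum 'I_m | (nat_of_ord j < nat_of_ord k)%N].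

Definition AS (u : 'I_m -> R) : 'M[R]_(m, n) :=
  \matrix_(i < m) (Qj u i *m acol i)^T.

End Defs.

Definition unit_upper_triangular (R : ringType) (m : nat) (C : 'M[R]_m) : Prop :=
  (forall i j : 'I_m, (j < i)%N -> C i j = 0) /\ (forall i : 'I_m, C i i = 1).

From mathcomp Require Import all_boot all_order all_algebra.
Import GRing.Theory Num.Theory.
Local Open Scope ring_scope.

(* Right multiplication of a row vector by [P_k(mu)^T = P_k(mu)] subtracts from
   it a multiple of [a_k^T].  Starting from [a_i^T] and applying only the [P_k]
   with [k > i], row [i] of [A_S(u)] is therefore [a_i^T] plus a combination of
   the later rows of [A]; the coefficients of these combinations, with [1] on
   the diagonal, form the unit upper triangular matrix [C(u)]. *)

Section LaterRowCombinations.
Variables (R : nzRingType) (m n : nat) (A : 'M[R]_(m, n)).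

Definition supported_after (i : 'I_m) (c : 'rV[R]_m) : Prop :=
  forall j : 'I_m, (j <= i)%N -> c 0 j = 0.

Definition row_plus_later (i : 'I_m) (v : 'rV[R]_n) : Prop :=
  exists2 c : 'rV[R]_m, supported_after i c & v = row i A + c *m A.

Lemma row_plus_later_row (i : 'I_m) : row_plus_later i (row i A).
Proof. by exists 0 => [j _|]; rewrite ?mxE // mul0mx addr0. Qed.

Lemma row_plus_laterB (i k : 'I_m) (a : R) (v : 'rV[R]_n) :
  (i < k)%N -> row_plus_later i v -> row_plus_later i (v - a *: row k A).
Proof.
move=> lt_ik [c c_after ->]; exists (c - a *: 'e_k) => [j le_ji|].
  have /negbTE ne_jk : j != k by apply: contraTneq le_ji => ->; rewrite -ltnNge.
  by rewrite !mxE c_after // ne_jk andbF mulr0 subr0.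
by rewrite mulmxBl -scalemxAl -rowE addrA.
Qed.

Lemma row_plus_later_unitri (B : 'M[R]_(m, n)) :
  (forall i, row_plus_later i (row i B)) ->
  exists C : 'M[R]_m, unit_upper_triangular C /\ B = C *m A.
Proof.
move=> /fin_all_exists2 [c c_after rowB].
pose C := \matrix_i ('e_i + c i) : 'M[R]_m.
have rowC i : row i C = 'e_i + c i by rewrite rowK.
exists C; split; first split => [i j lt_ji|i].
- have /negbTE ne_ji : j != i by apply: contraTneq lt_ji => ->; rewrite ltnn.
  by rewrite !mxE c_after ?(ltnW lt_ji) // ne_ji andbF addr0.
- by rewrite !mxE c_after // !eqxx addr0.
by apply/row_matrixP => i; rewrite row_mul rowC mulmxDl -rowE -rowB.
Qed.

End LaterRowCombinations.

Arguments row_plus_later {R m n} A i v.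

Section Projections.
Variables (R : realFieldType) (m n : nat) (A : 'M[R]_(m, n)).

Lemma trmx_Pk (k : 'I_m) (mu : R) : (Pk A k mu)^T = Pk A k mu.
Proof. by rewrite /Pk linearB /= trmx1 linearZ /= trmx_mul trmxK. Qed.

Lemma mulmx_Pk (k : 'I_m) (mu : R) (v : 'rV[R]_n) :
  v *m Pk A k mu = v - (mu / nrm2 A k * (v *m acol A k) 0 0) *: row k A.
Proof.
rewrite /Pk mulmxBr mulmx1 -scalemxAr mulmxA [in LHS](mx11_scalar (v *m _)).
by rewrite mul_scalar_mx /acol trmxK scalerA.
Qed.

Definition prod_Pk (u : 'I_m -> R) (s : seq 'I_m) : 'M[R]_n :=
  foldr (fun k M => M *m Pk A k (u k)) 1%:M s.

Lemma row_plus_later_mul_prod_Pk (u : 'I_m -> R) (i : 'I_m) (s : seq 'I_m)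
    (v : 'rV[R]_n) :
  all (fun k : 'I_m => (i < k)%N) s -> row_plus_later A i v ->
  row_plus_later A i (v *m (prod_Pk u s)^T).
Proof.
elim: s v => [|k s IHs] v /=; first by rewrite trmx1 mulmx1.
move=> /andP[lt_ik later_s] v_later.
rewrite trmx_mul trmx_Pk mulmxA mulmx_Pk; apply: IHs => //.
exact: row_plus_laterB.
Qed.

Lemma row_AS (u : 'I_m -> R) (i : 'I_m) :
  row i (AS A u) =
    row i A *m (prod_Pk u [seq k : 'I_m <- enum 'I_m | (i < k)%N])^T.
Proof. by rewrite rowK trmx_mul /acol trmxK. Qed.

End Projections.

Theorem theorem3p5 (R : realFieldType) (m n : nat) (A : 'M[R]_(m, n))
  (hA : forall i : 'I_m, row i A != 0) (u : 'I_m -> R) :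
  exists C : 'M[R]_m, unit_upper_triangular C /\ AS A u = C *m A.
Proof.
apply: row_plus_later_unitri => i; rewrite row_AS.
apply: row_plus_later_mul_prod_Pk; last exact: row_plus_later_row.
by apply/allP => k; rewrite mem_filter => /andP[].
Qed.
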